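(* Let $\mathsf N$ be odd and assume the setting below. For every $\lambda\ne0$ with $\mathsf B(\lambda)$ invertible and $\lambda\ne\pm\eta_a^{(h)}$ for all $a,h$, $$\langle t|\mathsf B^{-1}(\lambda)\mathsf A(\lambda)|t'\rangle=\det_{1\le a,b\le\mathsf N}\mathcal U^{(t,t')}_{a,b}(\lambda),$$ where for $b\in\{1,\dots,\mathsf N-1\}$ $$\mathcal U^{(t,t')}_{a,b}(\lambda)=(\eta_a^{(0)})^{2b-1}\sum_{c=1}^{p}q^{(2b-1)c}\frac{Q_{t'}(\eta_a^{(c)})\bar Q_t(\eta_a^{(c)})}{\omega_a(\eta_a^{(c)})},$$ $$\mathcal U^{(t,t')}_{a,\mathsf N}(\lambda)=\frac{(\eta_a^{(0)})^{\mathsf N-1}}{\textsc k}\sum_{h=1}^{p}\frac{q^{(\mathsf N-1)h}\,Q_{t'}(\eta_a^{(h)})\,\bar Q_t(\eta_a^{(h+1)})\,\bar a(\eta_a^{(h)})}{\omega_a(\eta_a^{(h)})\,\big(\lambda/\eta_a^{(h+1)}-\eta_a^{(h+1)}/\lambda\big)}.$$ Consequently, if moreover $\langle t|\mathsf U_n=\varphi_n^{(t)}\langle t|$ and $\mathsf U_n|t'\rangle=\varphi_n^{(t')}|t'\rangle$ with $\varphi_n^{(t')}\ne0$, and $\mathsf u_n=\mathsf U_n\mathsf B^{-1}(\mu_{n,+})\mathsf A(\mu_{n,+})\mathsf U_n^{-1}$, then $\langle t|\mathsf u_n|t'\rangle=\frac{\varphi_n^{(t)}}{\varphi_n^{(t')}}\det_{\mathsf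 N}\mathcal U^{(t,t')}(\mu_{n,+})$.
   Context: Let $p\ge3$ be odd, $q\in\mathbb C$ with $q^p=1$ and $q^2$ a primitive $p$-th root of unity, $\mathsf N$ odd. Let $\eta_1^{(0)},\dots,\eta_{\mathsf N}^{(0)}$ be nonzero, $\eta_a^{(h)}=q^h\eta_a^{(0)}$, with $(\eta_a^{(h)})^2\ne(\eta_b^{(h')})^2$ for $a\ne b$; $\textsc k\ne0$ a constant; $\bar a$ a complex function; $\omega_1,\dots,\omega_{\mathsf N}$ functions nonvanishing at the points $\eta_a^{(h)}$. For $\mathbf h\in(\mathbb Z/p\mathbb Z)^{\mathsf N}$ put $\mathsf b_{\mathbf h}(\lambda)=\textsc k\prod_{a=1}^{\mathsf N}(\lambda/\eta_a^{(h_a)}-\eta_a^{(h_a)}/\lambda)$ and $V_{\mathbf h}=\prod_{1\le b<a\le\mathsf N}((\eta_a^{(h_a)})^2-(\eta_b^{(h_b)})^2)$; $\mathbf e_a$ is the $a$-th unit vector. Operators $\mathsf A(\lambda),\mathsf B(\lambda)$ act on a space $\mathcal R$ with basis $\{|\mathbf h\rangle\}$ (right SOV basis) such that $\mathsf B(\lambda)|\mathbf h\rangle=\mathsf b_{\mathbf h}(\lambda)|\mathbf h\rangle$ and $\mathsf A(\lambda)|\mathbf h\rangle=\sum_{a=1}^{\mathsf N}|\mathbf h+\mathbf e_a\rangle\prod_{b\ne a}\frac{\lambda/\eta_b^{(h_b)}-\eta_b^{(h_b)}/\lambda}{\eta_a^{(h_a)}/\eta_b^{(h_b)}-\eta_b^{(h_b)}/\eta_a^{(h_a)}}\bar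 a(\eta_a^{(h_a)})$; the dual space has covectors $\{\langle\mathbf h|\}$ with $\langle\mathbf h|\mathbf h'\rangle=\delta_{\mathbf h,\mathbf h'}\prod_{b=1}^{\mathsf N}\omega_b(\eta_b^{(h_b)})/V_{\mathbf h}$. Given functions $\bar Q_t$, $Q_{t'}$ define $\langle t|=\sum_{\mathbf h}\prod_{a=1}^{\mathsf N}\bar Q_t(\eta_a^{(h_a)})\,V_{\mathbf h}\,\langle\mathbf h|/\prod_b\omega_b(\eta_b^{(h_b)})$ and $|t'\rangle=\sum_{\mathbf h}\prod_{a=1}^{\mathsf N}Q_{t'}(\eta_a^{(h_a)})\,V_{\mathbf h}\,|\mathbf h\rangle/\prod_b\omega_b(\eta_b^{(h_b)})$ (in the paper $\bar Q_t,Q_{t'}$ solve Baxter equations and these are the left/right transfer-matrix eigenstates). For the consequence: $\mathsf U_n$ is the invertible shift operator of the lattice sine-Gordon chain, $\mathsf u_n$ the local Weyl generator at site $n$, $\mu_{n,+}=i\kappa_nq^{1/2}\xi_n$ with $\mathsf B(\mu_{n,+})$ invertible, and $\textsc k=\prod_{n}\kappa_n/i$. *)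

From HB Require Import structures.
From mathcomp Require Import all_boot all_order all_algebra.
Set Implicit Arguments. Unset Strict Implicit. Unset Printing Implicit Defensive.
Import Order.TTheory GRing.Theory Num.Theory.
Local Open Scope ring_scope.

(* Right SOV basis labels h in (Z/pZ)^N are {ffun 'I_N -> 'I_p};
   vectors (elements of R) are coordinate functions {ffun {ffun 'I_N -> 'I_p} -> C}
   (v = sum_h v h |h>), covectors likewise (c = sum_h c h <h|). *)

Record sov_data (C : numClosedFieldType) (p N : nat) := SovData {
  sov_q : C;
  sov_eta0 : 'I_N -> C;
  sov_k : C;
  sov_abar : C -> C;
  sov_omega : 'I_N -> C -> C }.

Section SOV.
Variable C : numClosedFieldType.
Variables (p N : nat) (S : sov_data C p N).
Local Notation q := (sov_q S).
Local Notation eta0 := (sov_eta0 S).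
Local Notation kk := (sov_k S).
Local Notation abar := (sov_abar S).
Local Notation omega := (sov_omega S).

Local Notation lab := {ffun 'I_N -> 'I_p}.
Local Notation vec := {ffun lab -> C}.

Definition sov_eta (a : 'I_N) (c : nat) : C := q ^+ c * eta0 a.

Definition etah (h : lab) (a : 'I_N) : C := sov_eta a (h a).

Definition bh (h : lab) (l : C) : C :=
  kk * \prod_(a < N) (l / etah h a - etah h a / l).

Definition Vh (h : lab) : C :=
  \prod_(a < N) \prod_(b < N | (b < a)%N) (etah h a ^+ 2 - etah h b ^+ 2).

Definition Omh (h : lab) : C := \prod_(b < N) omega b (etah h b).

Definition shift (h : lab) (a : 'I_N) : lab :=
  [ffun b => if b == a then ordS (h b) else h b].

Definition ket (h : lab) : vec := [ffun h' => (h' == h)%:R].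

Definition Bop (l : C) (v : vec) : vec := [ffun h => bh h l * v h].

(* coefficient of |h + e_a> in A(lambda)|h> *)
Definition Acoef (l : C) (h : lab) (a : 'I_N) : C :=
  (\prod_(b < N | b != a)
      ((l / etah h b - etah h b / l) / (etah h a / etah h b - etah h b / etah h a)))
  * abar (etah h a).

Definition Aop (l : C) (v : vec) : vec :=
  [ffun h' => \sum_(h : lab) \sum_(a < N) v h * Acoef l h a * ket (shift h a) h'].

(* (sum_h c_h <h|)(sum_h' v_h' |h'>), using <h|h'> = delta_{h,h'} Omh h / Vh h *)
Definition pairing (c v : vec) : C :=
  \sum_(h : lab) c h * v h * (Omh h / Vh h).

Definition leftState (Qb : C -> C) : vec :=
  [ffun h => (\prod_(a < N) Qb (etah h a)) * Vh h / Omh h].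

Definition rightState (Q : C -> C) : vec :=
  [ffun h => (\prod_(a < N) Q (etah h a)) * Vh h / Omh h].

(* U^{(t,t')}_{a,b}(lambda), with 0-based indices a b : 'I_N;
   the paper's column index is b.+1 *)
Definition Uentry (Q Qb : C -> C) (l : C) (a b : 'I_N) : C :=
  if (b.+1 < N)%N then
    eta0 a ^+ (2 * b.+1 - 1) *
      \sum_(1 <= c < p.+1)
        q ^+ ((2 * b.+1 - 1) * c) * Q (sov_eta a c) * Qb (sov_eta a c) / omega a (sov_eta a c)
  else
    eta0 a ^+ (N - 1) / kk *
      \sum_(1 <= h < p.+1)
        (q ^+ ((N - 1) * h) * Q (sov_eta a h) * Qb (sov_eta a h.+1) * abar (sov_eta a h))
        / (omega a (sov_eta a h) * (l / sov_eta a h.+1 - sov_eta a h.+1 / l)).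

Definition Umat (Q Qb : C -> C) (l : C) : 'M[C]_N :=
  \matrix_(a < N, b < N) Uentry Q Qb l a b.

End SOV.

Notation sov_vec C p N := {ffun {ffun 'I_N -> 'I_p} -> C} (only parsing).

From HB Require Import structures.
From mathcomp Require Import all_boot all_order all_algebra.
From mathcomp Require Import ring.
Set Implicit Arguments. Unset Strict Implicit. Unset Printing Implicit Defensive.
Import Order.TTheory GRing.Theory Num.Theory.
Local Open Scope ring_scope.

(* In the SOV basis B(l) is diagonal with eigenvalues b_h(l), and A(l) maps
   |h> to a combination of the |h + e_a>.  Hence <t| B^-1 A |t'> is a sum over
   h and a of "transition terms" (lemma [pairing_expand]).  On the other side,
   every entry of the matrix U is a sum over a full period of levels c of the
   site a, so by multilinearity [det U] is a sum over all level assignments h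
   of determinants of matrices whose first N-1 columns are weighted powers of
   the variables x_b = (eta_b^(h_b))^2 and whose last column is arbitrary
   ([det_Umat]).  Such a weighted Vandermonde determinant is computed in
   closed form by expanding along the last column ([det_wvand]); its terms
   coincide one by one with the transition terms ([transition_term_eq]).
   The second statement then follows from linearity: |t'> is an eigenvector
   of U_n^-1 and <t| of U_n, so their eigenvalues factor out. *)

Lemma big_lift_neq (R : Type) (idx : R) (op : Monoid.com_law idx) n
    (a : 'I_n.+1) (F : 'I_n.+1 -> R) :
  \big[op/idx]_(i < n) F (lift a i) = \big[op/idx]_(b | b != a) F b.
Proof.
rewrite (reindex_omap (lift a) (unlift a)) /=; last first.
  by move=> b; case: unliftP => [k -> //|->]; rewrite eqxx.
by apply: eq_bigl => i; rewrite liftK eqxx andbT eq_sym neq_lift.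
Qed.

Lemma sum_nat_periodic (V : zmodType) p (f : nat -> V) : f p = f 0%N ->
  \sum_(1 <= c < p.+1) f c = \sum_(c < p) f c.
Proof.
move=> fp; apply: (addrI (f 0%N)).
by rewrite -big_ltn // -(big_mkord xpredT) big_nat_recr // fp addrC.
Qed.

Lemma det_sum_rows (R : comNzRingType) m k (E : 'I_m -> 'I_k -> 'I_m -> R) :
  \det (\matrix_(i, j) \sum_(c : 'I_k) E i c j) =
  \sum_(h : {ffun 'I_m -> 'I_k}) \det (\matrix_(i, j) E i (h i) j).
Proof.
rewrite /determinant.
under eq_bigr => s _ do
  (under eq_bigr => i _ do rewrite mxE; rewrite bigA_distr_bigA big_distrr /=).
rewrite exchange_big /=; apply: eq_bigr => h _; apply: eq_bigr => s _.
by congr (_ * _); apply: eq_bigr => i _; rewrite mxE.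
Qed.

(* [1 / (u/v - v/u) = u v / (u^2 - v^2)]: this turns the denominators of
   [A(l)] into the differences of the Vandermonde variables [eta^2]. *)
Lemma inv_sym_diff (F : fieldType) (u v : F) : u != 0 -> v != 0 ->
  (u / v - v / u)^-1 = u * v / (u ^+ 2 - v ^+ 2).
Proof.
move=> u0 v0; have -> : u / v - v / u = (u ^+ 2 - v ^+ 2) / (u * v).
  by field; rewrite u0 v0.
by rewrite invf_div.
Qed.

Lemma inv_eigenvector (C : fieldType) (T : finType)
    (U Uinv : {ffun T -> C} -> {ffun T -> C}) (v : {ffun T -> C}) (c : C) :
  (forall (k : C) (u w : {ffun T -> C}),
     U [ffun h => k * u h + w h] = [ffun h => k * U u h + U w h]) ->
  cancel U Uinv -> U v = [ffun h => c * v h] -> c != 0 ->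
  Uinv v = [ffun h => c^-1 * v h].
Proof.
move=> U_lin UK Uv c_neq0; set z : {ffun T -> C} := [ffun=> 0].
have Uz : U z = z.
  have z_eq : [ffun h => 1 * z h + z h] = z.
    by apply/ffunP => h; rewrite !ffunE mul1r addr0.
  apply/ffunP => h; have /ffunP/(_ h) := U_lin 1 z z.
  rewrite z_eq !ffunE mul1r => Uzh; apply: (addrI (U z h)).
  by rewrite addr0 -Uzh.
rewrite -[in LHS](_ : U [ffun h => c^-1 * v h] = v) ?UK //.
have -> : [ffun h => c^-1 * v h] = [ffun h => c^-1 * v h + z h].
  by apply/ffunP => h; rewrite !ffunE addr0.
by rewrite U_lin Uz Uv; apply/ffunP => h; rewrite !ffunE addr0 mulKf.
Qed.

Section WeightedVandermonde.
Variables (F : fieldType) (n : nat).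
Implicit Types (x w y : 'I_n.+1 -> F) (a b : 'I_n.+1).

Definition wvand x w y : 'M[F]_n.+1 :=
  \matrix_(b, j) if (j < n)%N then w b * x b ^+ j else y b.

Definition vdm_prod x : F :=
  \prod_(a < n.+1) \prod_(b < n.+1 | (b < a)%N) (x a - x b).

(* Deleting the last column does not renumber the other columns. *)
Lemma lift_max_val (j : 'I_n) : lift ord_max j = j :> nat.
Proof. by rewrite /= /bump leqNgt ltn_ord. Qed.

Lemma det_wvand_expand x w y :
  \det (wvand x w y) = \sum_a y a * cofactor (wvand x w (fun=> 0)) a ord_max.
Proof.
rewrite (expand_det_col _ ord_max); apply: eq_bigr => a _.
rewrite mxE ltnn; congr (_ * _); rewrite /cofactor; congr (_ * \det _).
by apply/matrixP => i j; rewrite !mxE lift_max_val ltn_ord.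
Qed.

Lemma cofactor_wvand_weights x w a :
  cofactor (wvand x w (fun=> 0)) a ord_max =
  (\prod_(b | b != a) w b) * cofactor (wvand x (fun=> 1) (fun=> 0)) a ord_max.
Proof.
rewrite /cofactor mulrCA; congr (_ * _).
have -> : row' a (col' ord_max (wvand x w (fun=> 0))) =
    diag_mx (\row_i w (lift a i)) *m row' a (col' ord_max (wvand x (fun=> 1) (fun=> 0))).
  by rewrite mul_diag_mx; apply/matrixP => i j; rewrite !mxE lift_max_val ltn_ord mul1r.
rewrite det_mulmx det_diag -big_lift_neq; congr (_ * _).
by apply: eq_bigr => i _; rewrite mxE.
Qed.

(* A last column [x b ^+ i] with [i < n] repeats an earlier column. *)
Lemma det_wvand_pow x i :
  (i < n)%N -> \det (wvand x (fun=> 1) (fun b => x b ^+ i)) = 0.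
Proof.
move=> lt_in; rewrite -det_tr.
have lt_i1 : (i < n.+1)%N by apply: ltnW.
apply: (@determinant_alternate _ _ _ (Ordinal lt_i1) ord_max).
  by rewrite -val_eqE /= neq_ltn lt_in.
by move=> j; rewrite !mxE /= lt_in ltnn mul1r.
Qed.

(* With last column [x b ^+ n] this is the transposed Vandermonde matrix. *)
Lemma det_wvand_vdm x :
  \det (wvand x (fun=> 1) (fun b => x b ^+ n)) = vdm_prod x.
Proof.
have -> : wvand x (fun=> 1) (fun b => x b ^+ n) = (Vandermonde n.+1 (\row_b x b))^T.
  apply/matrixP => i j; rewrite !mxE mul1r; case: ltnP => // le_nj.
  by have /eqP -> : (j : nat) == n by rewrite eqn_leq le_nj -ltnS ltn_ord.
rewrite det_tr det_Vandermonde /vdm_prod (exchange_big_dep xpredT) //=.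
by apply: eq_bigr => i _; apply: eq_bigr => j _; rewrite !mxE.
Qed.

(* Column operations: the last column may be any monic polynomial of
   degree [n] in [x b]. *)
Lemma det_wvand_monic x (P : {poly F}) : size P = n.+1 -> P \is monic ->
  \det (wvand x (fun=> 1) (fun b => P.[x b])) = vdm_prod x.
Proof.
move=> sP /monicP lP; rewrite -det_wvand_vdm !det_wvand_expand.
have sP' : (size P <= n.+1)%N by rewrite sP.
under eq_bigr => a _ do rewrite (horner_coef_wide _ sP') big_distrl /=.
rewrite exchange_big /= big_ord_recr /= big1 ?add0r.
  have -> : P`_n = 1 by rewrite -lP /lead_coef sP.
  by apply: eq_bigr => a _; rewrite mul1r.
move=> i _; under eq_bigr do rewrite -mulrA.
by rewrite -big_distrr /= -det_wvand_expand det_wvand_pow ?mulr0.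
Qed.

(* Cofactors of the Vandermonde matrix along its last column, obtained from
   the monic polynomial [prod_{b != a} ('X - x b)] vanishing at all [x b],
   [b != a]. *)
Lemma cofactor_vdm x a : injective x ->
  cofactor (wvand x (fun=> 1) (fun=> 0)) a ord_max =
  vdm_prod x / \prod_(b | b != a) (x a - x b).
Proof.
move=> inj_x; pose P := \prod_(b | b != a) ('X - (x b)%:P).
have sP : size P = n.+1.
  rewrite /P -big_filter size_prod_XsubC size_filter -sum1_count sum1dep_card.
  by rewrite cardsE cardC1 card_ord.
have := det_wvand_monic x sP (monic_prod_XsubC _ _ _).
rewrite det_wvand_expand (bigD1 a) //= big1 ?addr0; last first.
  by move=> b nba; rewrite horner_prod (bigD1 b) //= hornerXsubC subrr !mul0r.
rewrite horner_prod (eq_bigr (fun b => x a - x b)) => [<-|b _]; last first.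
  by rewrite hornerXsubC.
rewrite mulrC mulKf //; apply/prodf_neq0 => b nba.
by rewrite subr_eq0 (inj_eq inj_x) eq_sym.
Qed.

Lemma det_wvand x w y : injective x ->
  \det (wvand x w y) = \sum_a y a * (\prod_(b | b != a) w b) *
                         (vdm_prod x / \prod_(b | b != a) (x a - x b)).
Proof.
move=> inj_x; rewrite det_wvand_expand; apply: eq_bigr => a _.
by rewrite cofactor_wvand_weights cofactor_vdm // mulrA.
Qed.

End WeightedVandermonde.

Section Operators.
Variables (C : numClosedFieldType) (p N : nat) (S : sov_data C p N).
Local Notation vec := {ffun {ffun 'I_N -> 'I_p} -> C}.

Lemma bh_neq0_of_cancel (l : C) (Binv : vec -> vec) :
  cancel (Bop S l) Binv -> forall h, bh S h l != 0.
Proof.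
move=> BK h; apply/negP => /eqP bh0.
have : Bop S l (ket C h) = Bop S l [ffun=> 0].
  apply/ffunP => h'; rewrite !ffunE mulr0.
  by case: eqP => [->|_]; rewrite ?bh0 ?mul0r ?mulr0.
move=> /(congr1 Binv); rewrite !BK => /ffunP /(_ h).
by rewrite !ffunE eqxx => /eqP; rewrite oner_eq0.
Qed.

Lemma Binv_diag (l : C) (Binv : vec -> vec) (v : vec) :
  (forall h, bh S h l != 0) -> cancel (Bop S l) Binv ->
  Binv v = [ffun h => v h / bh S h l].
Proof.
move=> bh_neq0 BK.
rewrite -[in LHS](_ : Bop S l [ffun h => v h / bh S h l] = v) ?BK //.
by apply/ffunP => h; rewrite !ffunE mulrC divfK.
Qed.

Lemma bh_neq0_off_poles (l : C) :
  sov_k S != 0 -> l != 0 -> (forall a c, sov_eta S a c != 0) ->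
  (forall a c, l != sov_eta S a c /\ l != - sov_eta S a c) ->
  forall h, bh S h l != 0.
Proof.
move=> kk_neq0 l_neq0 eta_neq0 off_poles h; rewrite /bh mulf_neq0 //.
apply/prodf_neq0 => b _; have e_neq0 : etah S h b != 0 by apply: eta_neq0.
have -> : l / etah S h b - etah S h b / l =
    (l - etah S h b) * (l + etah S h b) / (l * etah S h b).
  by field; rewrite l_neq0 e_neq0.
have [ne_pos ne_neg] := off_poles b (h b).
apply: mulf_neq0; last by rewrite invr_eq0 mulf_neq0.
by rewrite mulf_neq0 // ?subr_eq0 ?addr_eq0.
Qed.

Lemma pairing_BA_scale (u v : vec) (l c : C) :
  pairing S u [ffun h => Aop S l [ffun h => c * v h] h / bh S h l]
  = c * pairing S u [ffun h => Aop S l v h / bh S h l].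
Proof.
have A_scale : Aop S l [ffun h => c * v h] = [ffun h => c * Aop S l v h].
  apply/ffunP => h; rewrite !ffunE mulr_sumr; apply: eq_bigr => h' _.
  by rewrite mulr_sumr; apply: eq_bigr => a _; rewrite ffunE; ring.
rewrite A_scale /pairing mulr_sumr; apply: eq_bigr => h _; rewrite !ffunE; ring.
Qed.

End Operators.

Section MatrixElement.
Variables (C : numClosedFieldType) (p n : nat) (S : sov_data C p n.+1).
Variables (Q Qb : C -> C) (l : C).
Local Notation q := (sov_q S).
Local Notation eta := (sov_eta S).
Local Notation om := (sov_omega S).
Local Notation kk := (sov_k S).
Local Notation abar := (sov_abar S).
Local Notation lab := {ffun 'I_n.+1 -> 'I_p}.
Hypothesis q_period : q ^+ p = 1.
Hypothesis p_gt0 : (0 < p)%N.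
Hypothesis eta0_neq0 : forall a, sov_eta0 S a != 0.
Hypothesis eta_sq_dist : forall (a b : 'I_n.+1) (h h' : nat),
  a != b -> eta a h ^+ 2 != eta b h' ^+ 2.
Hypothesis omega_neq0 : forall a h, om a (eta a h) != 0.
Hypothesis kk_neq0 : kk != 0.
Hypothesis bh_neq0 : forall h : lab, bh S h l != 0.

Lemma q_neq0 : q != 0.
Proof.
apply/eqP => q0; move: q_period; rewrite q0 => /eqP.
by rewrite expr0n -(prednK p_gt0) /= eq_sym oner_eq0.
Qed.

Lemma eta_neq0 a c : eta a c != 0.
Proof. by rewrite /sov_eta mulf_neq0 ?expf_neq0 ?q_neq0 ?eta0_neq0. Qed.

Lemma etah_shift_self (h : lab) a : etah S (shift h a) a = eta a (h a).+1.
Proof. by rewrite /etah /sov_eta /shift ffunE eqxx /= expr_mod. Qed.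

Lemma etah_shift_other (h : lab) a b : b != a -> etah S (shift h a) b = etah S h b.
Proof. by move=> nba; rewrite /etah /shift ffunE (negbTE nba). Qed.

Lemma sym_diff_neq0 (h : lab) b : l / etah S h b - etah S h b / l != 0.
Proof.
by apply: contra_neq (bh_neq0 h) => L0; rewrite /bh (bigD1 b) //= L0 mul0r mulr0.
Qed.

(* The data of site [a] at level [c]: the Vandermonde variable, the weight
   of the first [n] columns of [Umat], and the entry of its last column. *)
Definition xsite a c : C := eta a c ^+ 2.
Definition wsite a c : C := eta a c * Q (eta a c) * Qb (eta a c) / om a (eta a c).
Definition gsite a c : C :=
  eta a c ^+ n * Q (eta a c) * Qb (eta a c.+1) * abar (eta a c)
    / (om a (eta a c) * (l / eta a c.+1 - eta a c.+1 / l)) / kk.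

Definition Usite a c (j : 'I_n.+1) : C :=
  if (j < n)%N then wsite a c * xsite a c ^+ j else gsite a c.

Lemma Usite_periodic a j : Usite a p j = Usite a 0 j.
Proof.
have eta_p : eta a p = eta a 0 by rewrite /sov_eta q_period expr0.
have eta_p1 : eta a p.+1 = eta a 1 by rewrite /sov_eta exprS q_period mulr1.
by rewrite /Usite /wsite /xsite /gsite eta_p eta_p1.
Qed.

Lemma eta_pow a k c : sov_eta0 S a ^+ k * q ^+ (k * c) = eta a c ^+ k.
Proof. by rewrite /sov_eta exprMn -exprM mulnC mulrC. Qed.

Lemma Umat_sum : Umat S Q Qb l = \matrix_(a, j) \sum_(c < p) Usite a c j.
Proof.
apply/matrixP => a j.
rewrite !mxE -(@sum_nat_periodic _ p (fun c => Usite a c j) (Usite_periodic a j)).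
rewrite /Uentry /Usite ltnS; case: ifP => lt_jn; rewrite big_distrr /=;
  apply: eq_bigr => c _.
- have -> : (2 * j.+1 - 1 = (2 * j).+1)%N by rewrite mulnS.
  rewrite !mulrA eta_pow /wsite /xsite exprS exprM; ring.
- by rewrite subn1 /gsite -(eta_pow a n c); ring.
Qed.

(* Expanding each row of [Umat] over the levels, every choice [h] of levels
   gives a weighted Vandermonde determinant in the variables [xsite b (h b)],
   whose Vandermonde product is [Vh h]. *)
Lemma det_Umat : \det (Umat S Q Qb l) = \sum_(h : lab) \sum_a
  gsite a (h a) * (\prod_(b | b != a) wsite b (h b)) *
  (Vh S h / \prod_(b | b != a) (xsite a (h a) - xsite b (h b))).
Proof.
rewrite Umat_sum det_sum_rows; apply: eq_bigr => h _.
have -> : \matrix_(a, j) Usite a (h a) j =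
    wvand (fun b => xsite b (h b)) (fun b => wsite b (h b)) (fun b => gsite b (h b)).
  by apply/matrixP => a j; rewrite !mxE.
by rewrite det_wvand // => b c; apply: contra_eq; apply: eta_sq_dist.
Qed.

(* The contribution to [<t| B^-1 A |t'>] of the transition [h -> h + e_a]
   performed by [A] on the component of [|t'>] along [|h>]. *)
Definition transition_term (h : lab) a : C :=
  rightState S Q h * Acoef S l h a * (\prod_b Qb (etah S (shift h a) b))
    / bh S (shift h a) l.

Lemma Vh_neq0 (h : lab) : Vh S h != 0.
Proof.
apply/prodf_neq0 => a _; apply/prodf_neq0 => b lt_ba.
by rewrite subr_eq0 eta_sq_dist // eq_sym neq_ltn lt_ba.
Qed.

Lemma Omh_neq0 (h : lab) : Omh S h != 0.
Proof. by apply/prodf_neq0 => b _; apply: omega_neq0. Qed.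

(* The weights [V_h / Omh h] of [<t|] cancel those of the pairing, and
   the sum over the image basis vectors [|h + e_a>] is reindexed by [h]. *)
Lemma pairing_expand :
  pairing S (leftState S Qb) [ffun h => Aop S l (rightState S Q) h / bh S h l]
  = \sum_(h : lab) \sum_a transition_term h a.
Proof.
rewrite /pairing (eq_bigr (fun h' => \sum_(h : lab) \sum_a
    (h' == shift h a)%:R * transition_term h a)); last first.
  move=> h' _; rewrite !ffunE !(mulr_suml, mulr_sumr); apply: eq_bigr => h _.
  rewrite !(mulr_suml, mulr_sumr); apply: eq_bigr => a _.
  rewrite /ket /transition_term !ffunE.
  case: eqP => [-> | _]; last by rewrite !(mulr0, mul0r).
  by field; rewrite !(Vh_neq0, Omh_neq0, bh_neq0).
rewrite exchange_big /=; apply: eq_bigr => h _; rewrite exchange_big /=.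
apply: eq_bigr => a _; rewrite (bigD1 (shift h a)) //= eqxx mul1r big1 ?addr0 //.
by move=> h' /negbTE ->; rewrite mul0r.
Qed.

Lemma sym_ratio_neq0 (h : lab) a b : b != a ->
  etah S h a / etah S h b - etah S h b / etah S h a != 0.
Proof.
move=> nba; rewrite -invr_eq0 inv_sym_diff ?eta_neq0 //.
apply: mulf_neq0; first exact: mulf_neq0 (eta_neq0 _ _) (eta_neq0 _ _).
by rewrite invr_eq0 subr_eq0 eta_sq_dist // eq_sym.
Qed.

(* Dividing [A] by [b] at the target state [h + e_a], the factors of the
   sites [b != a], which are common to both, cancel. *)
Lemma Acoef_div_bh_shift (h : lab) a :
  Acoef S l h a / bh S (shift h a) l =
  abar (etah S h a) / (kk * (l / eta a (h a).+1 - eta a (h a).+1 / l) *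
    \prod_(b | b != a) (etah S h a / etah S h b - etah S h b / etah S h a)).
Proof.
have split_bh : bh S (shift h a) l =
    kk * (l / eta a (h a).+1 - eta a (h a).+1 / l) *
    \prod_(b | b != a) (l / etah S h b - etah S h b / l).
  rewrite /bh (bigD1 a) //= etah_shift_self mulrA; congr (_ * _).
  by apply: eq_bigr => b nba; rewrite etah_shift_other.
have L'_neq0 := sym_diff_neq0 (shift h a) a; rewrite etah_shift_self in L'_neq0.
rewrite /Acoef split_bh prodf_div.
set L' := l / _ - _; set PL := \prod_(b | b != a) (l / _ - _).
set PD := \prod_(b | b != a) (_ / _ - _); field.
by rewrite kk_neq0 L'_neq0 !prodf_seq_neq0; apply/andP; split; apply/allP => b _;
  apply/implyP => nba; rewrite ?sym_diff_neq0 ?sym_ratio_neq0.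
Qed.

Lemma transition_term_factor (h : lab) a :
  let ea := etah S h a in let ea' := eta a (h a).+1 in
  transition_term h a =
  Vh S h * (Q ea * Qb ea' * abar ea / (om a ea * kk * (l / ea' - ea' / l))) *
  \prod_(b | b != a) (Q (etah S h b) * Qb (etah S h b) / om b (etah S h b)
                       / (ea / etah S h b - etah S h b / ea)).
Proof.
move=> ea ea'; rewrite !prodf_div big_split /=.
have -> : transition_term h a = rightState S Q h *
    (\prod_b Qb (etah S (shift h a) b)) * (Acoef S l h a / bh S (shift h a) l).
  by rewrite /transition_term; ring.
rewrite Acoef_div_bh_shift /rightState ffunE /Omh.
rewrite [\prod_b Q _](bigD1 a) // [\prod_b Qb _](bigD1 a) //.
rewrite [\prod_b om b _](bigD1 a) //=.
rewrite etah_shift_self.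
under [\prod_(i | i != a) Qb _]eq_bigr => b nba do rewrite etah_shift_other //.
have L'_neq0 := sym_diff_neq0 (shift h a) a; rewrite etah_shift_self in L'_neq0.
set L' := l / _ - _; set PD := \prod_(b | b != a) (_ / _ - _).
set Pom := \prod_(b | b != a) om b _.
have PD_neq0 : PD != 0.
  by apply/prodf_neq0 => b nba; apply: sym_ratio_neq0.
have Pom_neq0 : Pom != 0 by apply/prodf_neq0 => b _; apply: omega_neq0.
by field; rewrite PD_neq0 Pom_neq0 L'_neq0 kk_neq0 omega_neq0.
Qed.

Lemma prod_const_neq (a : 'I_n.+1) (c : C) : \prod_(b | b != a) c = c ^+ n.
Proof. by rewrite prodr_const cardC1 card_ord. Qed.

Lemma transition_term_eq (h : lab) a : transition_term h a =
  gsite a (h a) * (\prod_(b | b != a) wsite b (h b)) *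
  (Vh S h / \prod_(b | b != a) (xsite a (h a) - xsite b (h b))).
Proof.
rewrite transition_term_factor /=.
rewrite (eq_bigr (fun b =>
    wsite b (h b) * etah S h a / (xsite a (h a) - xsite b (h b)))) => [|b nba];
  last by rewrite inv_sym_diff ?eta_neq0 // /wsite /xsite /etah; ring.
rewrite prodf_div big_split /= prod_const_neq /gsite.
have L'_neq0 := sym_diff_neq0 (shift h a) a; rewrite etah_shift_self in L'_neq0.
set L' := l / _ - _; set PX := \prod_(b | b != a) (xsite a _ - _).
have PX_neq0 : PX != 0.
  by apply/prodf_neq0 => b nba; rewrite subr_eq0 eta_sq_dist // eq_sym.
by field; rewrite PX_neq0 L'_neq0 kk_neq0 omega_neq0.
Qed.

Lemma matrix_element :
  pairing S (leftState S Qb) [ffun h => Aop S l (rightState S Q) h / bh S h l]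
  = \det (Umat S Q Qb l).
Proof.
rewrite pairing_expand det_Umat; apply: eq_bigr => h _; apply: eq_bigr => a _.
exact: transition_term_eq.
Qed.
End MatrixElement.

Unset Implicit Arguments.

Theorem mainTheorem8
  (C : numClosedFieldType) (p N : nat) (q : C) (eta0 : 'I_N -> C) (kk : C)
  (abar : C -> C) (omega : 'I_N -> C -> C) (Q Qb : C -> C) :
  let S := SovData p q eta0 kk abar omega in
  let tL := leftState S Qb in
  let tR := rightState S Q in
  (3 <= p)%N -> odd p ->
  q ^+ p = 1 -> p.-primitive_root (q ^+ 2) ->
  odd N ->
  (forall a : 'I_N, eta0 a != 0) ->
  (forall (a b : 'I_N) (h h' : nat), a != b -> sov_eta S a h ^+ 2 != sov_eta S b h' ^+ 2) ->
  kk != 0 ->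
  (forall (a : 'I_N) (h : nat), omega a (sov_eta S a h) != 0) ->
  (* main identity *)
  (forall (l : C) (Binv : sov_vec C p N -> sov_vec C p N),
      l != 0 ->
      cancel (Bop S l) Binv -> cancel Binv (Bop S l) ->
      (forall (a : 'I_N) (h : nat), l != sov_eta S a h /\ l != - sov_eta S a h) ->
      pairing S tL (Binv (Aop S l tR)) = \det (Umat S Q Qb l))
  /\
  (* consequence for u_n = U_n B^{-1}(mu) A(mu) U_n^{-1} *)
  (forall (mu : C) (Binv U Uinv : sov_vec C p N -> sov_vec C p N) (phit phit' : C),
      cancel (Bop S mu) Binv -> cancel Binv (Bop S mu) ->
      (forall (c : C) (u v : sov_vec C p N), U [ffun h => c * u h + v h] = [ffun h => c * U u h + U v h]) ->
      cancel U Uinv -> cancel Uinv U ->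
      (forall v : sov_vec C p N, pairing S tL (U v) = phit * pairing S tL v) ->
      U tR = [ffun h => phit' * tR h] ->
      phit' != 0 ->
      pairing S tL (U (Binv (Aop S mu (Uinv tR)))) = phit / phit' * \det (Umat S Q Qb mu)).
Proof.
move=> S tL tR p_ge3 _ q_period _ oddN eta0_neq0 eta_sq_dist kk_neq0 omega_neq0.
(* N is odd, in particular positive. *)
destruct N as [|n]; first by [].
have p_gt0 : (0 < p)%N by apply: leq_trans p_ge3.
have eta_neq0 := @eta_neq0 _ _ _ S q_period p_gt0 eta0_neq0.
have matrix_element := @matrix_element _ _ _ S Q Qb _ q_period p_gt0 eta0_neq0
  eta_sq_dist omega_neq0 kk_neq0.
split=> [l Binv l_neq0 BK _ off_poles | mu Binv U Uinv phit phit' BK _ U_lin UK _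
         tL_eigen tR_eigen phit'_neq0].
- have bh_neq0 := bh_neq0_off_poles (S := S) kk_neq0 l_neq0 eta_neq0 off_poles.
  by rewrite (Binv_diag _ bh_neq0 BK) matrix_element.
- have bh_neq0 := bh_neq0_of_cancel BK.
  rewrite tL_eigen (inv_eigenvector U_lin UK tR_eigen phit'_neq0).
  by rewrite (Binv_diag _ bh_neq0 BK) pairing_BA_scale matrix_element // mulrA.
Qed.
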